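(* Let $\mathcal A=\mathcal A_0\oplus\mathcal A_1$ be a GDN superalgebra generated by $X=X_0\cup X_1$ with $X_0\subseteq\mathcal A_0$, $X_1\subseteq\mathcal A_1$. Then for every integer $q\ge1$, $$[\mathcal A_0,\underbrace{\mathcal A_1,\dots,\mathcal A_1}_{q}]_L\subseteq\sum_{\substack{2t+m+p=q\\ t,m\ge0,\ p\in\{1,2\}}}[\mathcal A_0,\underbrace{\mathcal A_0,\dots,\mathcal A_0}_{t},\underbrace{kX_1,\dots,kX_1}_{m},\underbrace{\mathcal A_1,\dots,\mathcal A_1}_{p}]_L,$$ where $kX_1$ is the linear span of $X_1$.
   Context: A GDN superalgebra is a superalgebra $\mathcal A=\mathcal A_0\oplus\mathcal A_1$ over a field $k$ (product $\circ$, $\mathcal A_i\circ\mathcal A_j\subseteq\mathcal A_{i+j}$ mod 2, $|x|=i$ for nonzero $x\in\mathcal A_i$) satisfying for homogeneous $x,y,z$: $x\circ(y\circ z)-(x\circ y)\circ z=(-1)^{|x||y|}(y\circ(x\circ z)-(y\circ x)\circ z)$ and $(x\circ y)\circ z=(-1)^{|y||z|}(x\circ z)\circ y$. For subspaces $\mathcal V_i$, $[\mathcal V_1,\dots,\mathcal V_n]_L$ denotes the span of all $((\cdots((x_1\circ x_2)\circ x_3)\cdots)\circ x_n)$ with $x_i\in\mathcal V_i$. *)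

From HB Require Import structures.
From mathcomp Require Import all_boot all_order all_algebra.
Set Implicit Arguments. Unset Strict Implicit. Unset Printing Implicit Defensive.
Import GRing.Theory.
Local Open Scope ring_scope.

Section GDN.
Variables (k : fieldType) (V : lmodType k).

Definition is_subspace (S : V -> Prop) : Prop :=
  S 0 /\ forall (a : k) x y, S x -> S y -> S (a *: x + y).

Definition lin_span (S : V -> Prop) (v : V) : Prop :=
  exists (n : nat) (c : 'I_n -> k) (w : 'I_n -> V),
    (forall i, S (w i)) /\ v = \sum_(i < n) c i *: w i.

Variable mul : V -> V -> V.

Fixpoint lnorm (x : V) (ys : seq V) : V :=
  if ys is y :: ys' then lnorm (mul x y) ys' else x.

Definition Lprods (V1 : V -> Prop) (Vs : seq (V -> Prop)) (v : V) : Prop :=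
  exists x ys, V1 x /\ size ys = size Vs /\
    (forall i, (i < size Vs)%N -> nth (fun _ => True) Vs i (nth 0 ys i)) /\
    v = lnorm x ys.

Definition Lspan (V1 : V -> Prop) (Vs : seq (V -> Prop)) : V -> Prop :=
  lin_span (Lprods V1 Vs).

(* sign (-1)^(|x||y|) for degrees i j : bool (false = even, true = odd) *)
Definition ssign (i j : bool) : k := if i && j then -1 else 1.

Definition GDN_superalgebra (A : bool -> V -> Prop) : Prop :=
      (forall (a : k) x y z, mul (a *: x + y) z = a *: mul x z + mul y z) /\
      (forall (a : k) x y z, mul z (a *: x + y) = a *: mul z x + mul z y) /\
      (forall i, is_subspace (A i)) /\
      (forall v, exists v0 v1, A false v0 /\ A true v1 /\ v = v0 + v1) /\
      (forall v, A false v -> A true v -> v = 0) /\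
      (forall i j x y, A i x -> A j y -> A (i (+) j) (mul x y)) /\
      (forall i j l x y z, A i x -> A j y -> A l z ->
         mul x (mul y z) - mul (mul x y) z =
         ssign i j *: (mul y (mul x z) - mul (mul y x) z)
         /\ mul (mul x y) z = ssign j l *: mul (mul x z) y).

Definition gen_subalg (X : V -> Prop) (v : V) : Prop :=
  forall S : V -> Prop, is_subspace S -> (forall x y, S x -> S y -> S (mul x y)) ->
    (forall x, X x -> S x) -> S v.

Definition generates (X : V -> Prop) : Prop := forall v, gen_subalg X v.

End GDN.

From HB Require Import structures.
From mathcomp Require Import all_boot all_order all_algebra.
From mathcomp Require Import zify.
Import GRing.Theory.
Local Open Scope ring_scope.
Set Implicit Arguments. Unset Strict Implicit. Unset Printing Implicit Defensive.

(* By the second GDN identity, all factors but the first of a left-normed product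
   of homogeneous elements commute up to sign.  The case q = 3 carries the
   argument: the b in A_1 such that ((x b) b2) b3 lies in the target span for all
   x in A_0 and b2, b3 in A_1 form a subspace containing X_1, and containing u v
   whenever u is in A_1 and v in A_0, or u is in A_0 and v is such an element.
   In both cases the first GDN identity x (u v) = (x u) v + u (x v) - (u x) v
   splits u v into two factors, which can be rearranged into target products.
   Since A_0 + (this subspace) is then a subalgebra containing X, it contains
   all of A_1.  For larger q, multiply by the last odd factor: a target product
   ending with one odd factor acquires a second one, and one ending with two
   acquires a third, whereupon the three odd factors are moved to the front and
   the case q = 3 applies. *)

Section Subspaces.
Variables (k : fieldType) (V : lmodType k).
Implicit Types (S W : V -> Prop) (u w x y : V).

Lemma subspace0 W : is_subspace W -> W 0.
Proof. by case. Qed.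

Lemma subspaceZD W a x y : is_subspace W -> W x -> W y -> W (a *: x + y).
Proof. by case=> _; apply. Qed.

Lemma subspaceD W x y : is_subspace W -> W x -> W y -> W (x + y).
Proof. by move=> HW Wx Wy; rewrite -[x]scale1r; apply: subspaceZD HW Wx Wy. Qed.

Lemma subspaceZ W a x : is_subspace W -> W x -> W (a *: x).
Proof. by move=> HW Wx; rewrite -[a *: x]addr0; exact: subspaceZD HW Wx (subspace0 HW). Qed.

Lemma subspaceN W x : is_subspace W -> W x -> W (- x).
Proof. by move=> HW Wx; rewrite -scaleN1r; apply: subspaceZ. Qed.

Lemma subspaceB W x y : is_subspace W -> W x -> W y -> W (x - y).
Proof. by move=> HW Wx Wy; apply: subspaceD HW Wx (subspaceN HW Wy). Qed.

Lemma lin_span0 S : lin_span S 0.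
Proof. by exists 0%N, (fun=> 0), (fun=> 0); split; [case | rewrite big_ord0]. Qed.

Lemma lin_span_cons S a s y : S s -> lin_span S y -> lin_span S (a *: s + y).
Proof.
move=> Ss [n [c [w [Sw ->]]]].
exists n.+1, (fun i => if unlift ord0 i is Some j then c j else a),
  (fun i => if unlift ord0 i is Some j then w j else s); split.
  by move=> i; case: (unlift ord0 i).
by rewrite big_ord_recl unlift_none; congr (_ + _); apply: eq_bigr => i _; rewrite liftK.
Qed.

Lemma lin_span_in S x : S x -> lin_span S x.
Proof. by move=> Sx; rewrite -[x]addr0 -[x]scale1r; apply: lin_span_cons (lin_span0 S). Qed.

Lemma lin_span_subspace S : is_subspace (lin_span S).
Proof.
split; first exact: lin_span0.
move=> a x y [n [c [w [Sw ->]]]] Sy.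
elim: n c w Sw => [|n IHn] c w Sw; first by rewrite big_ord0 scaler0 add0r.
rewrite big_ord_recl scalerDr scalerA -addrA.
by apply: lin_span_cons (Sw _) (IHn _ _ (fun i => Sw _)).
Qed.

Lemma lin_span_min S W v :
  lin_span S v -> is_subspace W -> (forall x, S x -> W x) -> W v.
Proof.
case=> n [c [w [Sw ->]]] HW SW.
elim: n c w Sw => [|n IHn] c w Sw; first by rewrite big_ord0; apply: subspace0.
by rewrite big_ord_recr /= addrC; apply: subspaceZD (SW _ (Sw _)) (IHn _ _ (fun i => Sw _)).
Qed.

Definition pmeq u w := u = w \/ u = - w.

Lemma pmeq_refl u : pmeq u u.
Proof. by left. Qed.

Lemma pmeq_sym u w : pmeq u w -> pmeq w u.
Proof. by case=> ->; [left | right; rewrite opprK]. Qed.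

Lemma pmeq_trans u w z : pmeq u w -> pmeq w z -> pmeq u z.
Proof. by case=> ->; case=> ->; rewrite ?opprK; [left | right | right | left]. Qed.

Lemma subspace_pmeq W u w : is_subspace W -> pmeq u w -> W w -> W u.
Proof. by move=> HW [->|->] // Ww; apply: subspaceN. Qed.

End Subspaces.

Section Entrywise.
Variable T : eqType.

Fixpoint entrywise (Ps : seq (T -> Prop)) (ys : seq T) : Prop :=
  match Ps, ys with
  | [::], [::] => True
  | P :: Ps', y :: ys' => P y /\ entrywise Ps' ys'
  | _, _ => False
  end.

Lemma entrywise_nth y0 Ps ys :
  size ys = size Ps /\ (forall i, (i < size Ps)%N -> nth (fun=> True) Ps i (nth y0 ys i))
  <-> entrywise Ps ys.
Proof.
elim: Ps ys => [|P Ps IHPs] [|y ys] //=; try by split=> // [[]].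
rewrite -IHPs; split=> [[[Hs] H] | [Py [Hs H]]].
  by split; [apply: (H 0%N) | split=> // i; apply: (H i.+1)].
by split=> [|[|i]]; rewrite ?Hs //; apply: H.
Qed.

Lemma entrywise_cat Ps Qs ys zs :
  entrywise Ps ys -> entrywise Qs zs -> entrywise (Ps ++ Qs) (ys ++ zs).
Proof. by elim: Ps ys => [|P Ps IHPs] [|y ys] //= [Py Hys] Hzs; split; last apply: IHPs. Qed.

Lemma entrywise_nseq (P : T -> Prop) n ys :
  entrywise (nseq n P) ys <-> size ys = n /\ {in ys, forall y, P y}.
Proof.
elim: n ys => [|n IHn] [|y ys] /=; try by split=> // [[]].
rewrite IHn; split=> [[Py [-> Hys]] | [[Hs] Hys]].
  by split=> // z; rewrite inE => /predU1P [->|/Hys].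
by split; [apply: Hys; rewrite mem_head | split=> // z Hz; apply: Hys; rewrite inE Hz orbT].
Qed.

End Entrywise.

Section GDN.
Variables (k : fieldType) (V : lmodType k) (mul : V -> V -> V) (A : bool -> V -> Prop).
Variables (X0 X1 : V -> Prop).
Hypothesis mul_linl : forall (a : k) x y z, mul (a *: x + y) z = a *: mul x z + mul y z.
Hypothesis mul_linr : forall (a : k) x y z, mul z (a *: x + y) = a *: mul z x + mul z y.
Hypothesis A_subspace : forall i, is_subspace (A i).
Hypothesis A_disjoint : forall v, A false v -> A true v -> v = 0.
Hypothesis A_graded : forall i j x y, A i x -> A j y -> A (i (+) j) (mul x y).
Hypothesis gdn_identities : forall i j l x y z, A i x -> A j y -> A l z ->
  mul x (mul y z) - mul (mul x y) z = ssign k i j *: (mul y (mul x z) - mul (mul y x) z)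
  /\ mul (mul x y) z = ssign k j l *: mul (mul x z) y.
Hypothesis X0_even : forall x, X0 x -> A false x.
Hypothesis X1_odd : forall x, X1 x -> A true x.
Hypothesis X_generates : generates mul (fun x => X0 x \/ X1 x).

Local Notation A0 := (A false).
Local Notation A1 := (A true).
Local Notation kX1 := (lin_span X1).
Local Notation ln := (lnorm mul).
Implicit Types (W : V -> Prop) (a : k) (b c d e h u v w x y z : V) (s : seq V).

Lemma mul0l z : mul 0 z = 0.
Proof. by have := mul_linl (-1) 0 0 z; rewrite !scaleN1r !addNr. Qed.

Lemma mul0r z : mul z 0 = 0.
Proof. by have := mul_linr (-1) 0 0 z; rewrite !scaleN1r !addNr. Qed.

Lemma mulDl x y z : mul (x + y) z = mul x z + mul y z.
Proof. by rewrite -[x]scale1r mul_linl !scale1r. Qed.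

Lemma mulZl a x z : mul (a *: x) z = a *: mul x z.
Proof. by rewrite -[a *: x]addr0 mul_linl mul0l addr0. Qed.

Lemma mulNl x z : mul (- x) z = - mul x z.
Proof. by rewrite -scaleN1r mulZl scaleN1r. Qed.

Lemma mulDr x y z : mul z (x + y) = mul z x + mul z y.
Proof. by rewrite -[x]scale1r mul_linr !scale1r. Qed.

Lemma lnormD x y s : ln (x + y) s = ln x s + ln y s.
Proof. by elim: s x y => [|z s IHs] x y //=; rewrite mulDl IHs. Qed.

Lemma lnormZ a x s : ln (a *: x) s = a *: ln x s.
Proof. by elim: s x => [|z s IHs] x //=; rewrite mulZl IHs. Qed.

Lemma lnormN x s : ln (- x) s = - ln x s.
Proof. by rewrite -scaleN1r lnormZ scaleN1r. Qed.

Lemma lnorm_cat x s1 s2 : ln x (s1 ++ s2) = ln (ln x s1) s2.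
Proof. by elim: s1 x => [|z s IHs] x //=. Qed.

Lemma lnorm_rcons x s b : ln x (rcons s b) = mul (ln x s) b.
Proof. by rewrite -cats1 lnorm_cat. Qed.

Lemma subspace_lnorm W s : is_subspace W -> is_subspace (fun h => W (ln h s)).
Proof.
move=> HW; split=> [|a x y Wx Wy]; last by rewrite lnormD lnormZ; apply: subspaceZD.
by rewrite -(scale0r 0) lnormZ scale0r; apply: subspace0.
Qed.

Lemma subspace_mulr W b : is_subspace W -> is_subspace (fun h => W (mul h b)).
Proof. exact: (subspace_lnorm [:: b]). Qed.

Lemma mul00 x y : A0 x -> A0 y -> A0 (mul x y). Proof. exact: A_graded. Qed.
Lemma mul01 x y : A0 x -> A1 y -> A1 (mul x y). Proof. exact: A_graded. Qed.
Lemma mul10 x y : A1 x -> A0 y -> A1 (mul x y). Proof. exact: A_graded. Qed.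
Lemma mul11 x y : A1 x -> A1 y -> A0 (mul x y). Proof. exact: A_graded. Qed.

Lemma kX1_odd d : kX1 d -> A1 d.
Proof. by move=> Hd; apply: lin_span_min Hd (A_subspace true) X1_odd. Qed.

Definition homogeneous x := exists i, A i x.
Definition all_homogeneous s := forall y, y \in s -> homogeneous y.

Lemma all_homogeneous_nil : all_homogeneous [::].
Proof. by []. Qed.

Lemma all_homogeneous_cons y s :
  homogeneous y -> all_homogeneous s -> all_homogeneous (y :: s).
Proof. by move=> Hy Hs z; rewrite inE => /predU1P [->|/Hs]. Qed.

Lemma all_homogeneous_consE y s :
  all_homogeneous (y :: s) -> homogeneous y /\ all_homogeneous s.
Proof. by move=> Hs; split=> [|z Hz]; apply: Hs; rewrite inE ?eqxx ?Hz ?orbT. Qed.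

Lemma all_homogeneous_cat s1 s2 :
  all_homogeneous s1 -> all_homogeneous s2 -> all_homogeneous (s1 ++ s2).
Proof. by move=> H1 H2 z; rewrite mem_cat => /orP [/H1|/H2]. Qed.

Lemma entrywise_homogeneous i n s : entrywise (nseq n (A i)) s -> all_homogeneous s.
Proof. by case/entrywise_nseq=> _ Hs y /Hs; exists i. Qed.

Lemma entrywise_kX1_homogeneous n s : entrywise (nseq n kX1) s -> all_homogeneous s.
Proof. by case/entrywise_nseq=> _ Hs y /Hs /kX1_odd; exists true. Qed.

Ltac grade_tac := solve [eauto using mul00, mul01, mul10, mul11, kX1_odd].
Ltac homogeneous_tac := solve [exists false; grade_tac | exists true; grade_tac].
Ltac all_homogeneous_tac := solve [repeat first
  [ apply: all_homogeneous_nil | apply: all_homogeneous_cat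
  | apply: all_homogeneous_cons; first homogeneous_tac
  | apply: entrywise_homogeneous; eassumption
  | apply: entrywise_kX1_homogeneous; eassumption ]].
Ltac perm_tac := apply/permP => P; rewrite /= ?count_cat /= ?count_cat /= ?count_cat /=; lia.

Lemma homogeneous_mul x y : homogeneous x -> homogeneous y -> homogeneous (mul x y).
Proof. by case=> i Hx [j Hy]; exists (i (+) j); apply: A_graded. Qed.

Lemma mul_swap_pmeq h u v : homogeneous h -> homogeneous u -> homogeneous v ->
  pmeq (mul (mul h u) v) (mul (mul h v) u).
Proof.
case=> i Hh [j Hu] [l Hv]; have [_ ->] := gdn_identities Hh Hu Hv.
by rewrite /ssign; case: (j && l); [right; rewrite scaleN1r | left; rewrite scale1r].
Qed.

Lemma pmeq_lnorm u w s : pmeq u w -> pmeq (ln u s) (ln w s).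
Proof. by case=> ->; [left | right; rewrite lnormN]. Qed.

Lemma lnorm_move_front x s1 y s2 : homogeneous x -> all_homogeneous s1 -> homogeneous y ->
  pmeq (ln x (s1 ++ y :: s2)) (ln x (y :: s1 ++ s2)).
Proof.
elim: s1 x => [|z s1 IHs1] x Hx + Hy /=; first by move=> _; apply: pmeq_refl.
case/all_homogeneous_consE=> Hz Hs1.
apply: pmeq_trans (IHs1 _ (homogeneous_mul Hx Hz) Hs1 Hy) _.
exact: pmeq_lnorm (s1 ++ s2) (mul_swap_pmeq Hx Hz Hy).
Qed.

Lemma lnorm_perm_pmeq x s1 s2 : homogeneous x -> all_homogeneous s1 -> perm_eq s1 s2 ->
  pmeq (ln x s1) (ln x s2).
Proof.
elim: s1 x s2 => [|y s1 IHs1] x s2 Hx Hs Hp.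
  by move: Hp; rewrite perm_sym => /perm_nilP ->; apply: pmeq_refl.
have [Hy Hs1] := all_homogeneous_consE Hs.
have y_s2 : y \in s2 by rewrite -(perm_mem Hp) mem_head.
move: Hp; case/splitPr: y_s2 => t1 t2 Hp.
have Ht : all_homogeneous (t1 ++ y :: t2) by move=> z; rewrite -(perm_mem Hp); apply: Hs.
have Hp' : perm_eq s1 (t1 ++ t2).
  by rewrite -(perm_cons y); apply: perm_trans Hp _; perm_tac.
apply: pmeq_trans (IHs1 _ _ (homogeneous_mul Hx Hy) Hs1 Hp') _.
by apply/pmeq_sym/lnorm_move_front => // z Hz; apply: Ht; rewrite mem_cat Hz.
Qed.

Lemma subspace_lnorm_perm W x s s' : is_subspace W -> homogeneous x -> all_homogeneous s ->
  perm_eq s s' -> W (ln x s') -> W (ln x s).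
Proof. by move=> HW Hx Hs Hp; apply: subspace_pmeq HW (lnorm_perm_pmeq Hx Hs Hp). Qed.

Lemma Lprods_entrywise V1 Vs w :
  Lprods mul V1 Vs w <-> exists x ys, [/\ V1 x, entrywise Vs ys & w = ln x ys].
Proof.
split=> [[x [ys [Hx [Hs [Hn ->]]]]] | [x [ys [Hx Hys ->]]]].
  by exists x, ys; split=> //; apply/(entrywise_nth 0).
by case/(entrywise_nth 0): Hys => Hs Hn; exists x, ys.
Qed.

Lemma odd_part_ind (P : V -> Prop) : is_subspace P ->
    (forall x, X1 x -> P x) ->
    (forall u v, A1 u -> A0 v -> P (mul u v)) ->
    (forall u v, A0 u -> A1 v -> P v -> P (mul u v)) ->
  forall b, A1 b -> P b.
Proof.
move=> HP PX1 P10 P01 b Hb.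
pose S v := exists v0 v1, [/\ A0 v0, A1 v1, P v1 & v = v0 + v1].
have S_subspace : is_subspace S.
  split; first by exists 0, 0; split; rewrite ?addr0 //; apply: subspace0.
  move=> a _ _ [x0 [x1 [Hx0 Hx1 Px1 ->]]] [y0 [y1 [Hy0 Hy1 Py1 ->]]].
  exists (a *: x0 + y0), (a *: x1 + y1); split; try by apply: subspaceZD.
  by rewrite scalerDr addrACA.
have S_mul x y : S x -> S y -> S (mul x y).
  move: x y => _ _ [x0 [x1 [Hx0 Hx1 Px1 ->]]] [y0 [y1 [Hy0 Hy1 Py1 ->]]].
  exists (mul x0 y0 + mul x1 y1), (mul x0 y1 + mul x1 y0); split.
  - exact: subspaceD (A_subspace _) (mul00 Hx0 Hy0) (mul11 Hx1 Hy1).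
  - exact: subspaceD (A_subspace _) (mul01 Hx0 Hy1) (mul10 Hx1 Hy0).
  - exact: subspaceD HP (P01 _ _ Hx0 Hy1 Py1) (P10 _ _ Hx1 Hy0).
  - by rewrite !mulDl !mulDr [mul x1 y0 + _]addrC addrACA.
have S_X x : X0 x \/ X1 x -> S x.
  case=> Hx; [exists x, 0 | exists 0, x]; rewrite ?addr0 ?add0r; split=> //.
  - exact: X0_even.
  - exact: subspace0 (A_subspace _).
  - exact: subspace0 HP.
  - exact: subspace0 (A_subspace _).
  - exact: X1_odd.
  - exact: PX1.
have [b0 [b1 [Hb0 Hb1 Pb1 Eb]]] := X_generates b S_subspace S_mul S_X.
suff b0_eq0 : b0 = 0 by rewrite Eb b0_eq0 add0r.
apply: A_disjoint Hb0 _.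
have -> : b0 = b - b1 by rewrite Eb addrK.
exact: subspaceB (A_subspace _) Hb Hb1.
Qed.

Definition standard_prod t m p w := exists x cs ds es,
  [/\ A0 x, entrywise (nseq t A0) cs, entrywise (nseq m kX1) ds, entrywise (nseq p A1) es
    & w = ln x (cs ++ ds ++ es)].

Definition standard_span q := lin_span (fun w => exists t m p : nat,
  [/\ (2 * t + m + p)%N = q, (p = 1 \/ p = 2)%N & standard_prod t m p w]).

Lemma standard_span_subspace q : is_subspace (standard_span q).
Proof. exact: lin_span_subspace. Qed.

Lemma standard_span_perm q x s s' : homogeneous x -> all_homogeneous s -> perm_eq s s' ->
  standard_span q (ln x s') -> standard_span q (ln x s).
Proof. exact: subspace_lnorm_perm (standard_span_subspace q). Qed.

Lemma standard_span_in q t m p w : (2 * t + m + p)%N = q -> (p = 1 \/ p = 2)%N ->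
  standard_prod t m p w -> standard_span q w.
Proof. by move=> Hq Hp Hw; apply: lin_span_in; exists t, m, p. Qed.

Lemma standard_span_lnorm q t m w cs ds : standard_span q w ->
    entrywise (nseq t A0) cs -> entrywise (nseq m kX1) ds ->
  standard_span (q + (2 * t + m)) (ln w (cs ++ ds)).
Proof.
move=> Hw Hcs Hds.
apply: (lin_span_min Hw (subspace_lnorm _ (standard_span_subspace _))).
move=> _ [t0 [m0 [p [<- Hp [x [cs0 [ds0 [es [Hx Hcs0 Hds0 Hes ->]]]]]]]]].
rewrite -lnorm_cat.
apply: (@standard_span_perm _ _ _ ((cs0 ++ cs) ++ (ds0 ++ ds) ++ es)).
- by exists false.
- all_homogeneous_tac.
- perm_tac.
apply: (@standard_span_in _ (t0 + t) (m0 + m) p); [lia | done |].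
by exists x, (cs0 ++ cs), (ds0 ++ ds), es; split; rewrite // nseqD; apply: entrywise_cat.
Qed.

Lemma standard_span3_even h c e : A0 h -> A0 c -> A1 e -> standard_span 3 (ln h [:: c; e]).
Proof.
by move=> Hh Hc He; apply: (@standard_span_in _ 1 0 1) => //; [left | exists h, [:: c], [::], [:: e]].
Qed.

Lemma left_symmetric_expand i j l x y z : A i x -> A j y -> A l z -> ssign k i j = 1 ->
  mul x (mul y z) = mul (mul x y) z + (mul y (mul x z) - mul (mul y x) z).
Proof.
move=> Hx Hy Hz Hs; have [+ _] := gdn_identities Hx Hy Hz.
by rewrite Hs scale1r => /eqP; rewrite subr_eq addrC => /eqP.
Qed.

Definition triple_good b := forall x b2 b3, A0 x -> A1 b2 -> A1 b3 ->
  standard_span 3 (ln x [:: b; b2; b3]).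

Lemma triple_good_subspace : is_subspace triple_good.
Proof.
split=> [x b2 b3 _ _ _ | a y y' Hy Hy' x b2 b3 Hx H2 H3].
  by rewrite /= mul0r !mul0l; apply: subspace0 (standard_span_subspace 3).
rewrite /= mul_linr !mul_linl.
exact: subspaceZD (standard_span_subspace 3) (Hy _ _ _ Hx H2 H3) (Hy' _ _ _ Hx H2 H3).
Qed.

Lemma triple_good_X1 d : X1 d -> triple_good d.
Proof.
move=> Hd x b2 b3 Hx H2 H3; apply: (@standard_span_in _ 0 1 2); [done | by right |].
by exists x, [::], [:: d], [:: b2; b3]; split=> //=; split=> //; apply: lin_span_in.
Qed.

Lemma triple_good_mul10 u v : A1 u -> A0 v -> triple_good (mul u v).
Proof.
move=> Hu Hv x b2 b3 Hx H2 H3.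
have -> : ln x [:: mul u v; b2; b3] =
    ln x [:: u; v; b2; b3] + ln u [:: mul x v; b2; b3] - ln u [:: x; v; b2; b3].
  by rewrite /= (left_symmetric_expand Hx Hu Hv) // !(mulDl, mulNl) addrA.
apply: subspaceB (standard_span_subspace 3) _ _.
  apply: subspaceD (standard_span_subspace 3) _ _.
- apply: (@standard_span_perm _ _ _ [:: u; b2; v; b3]);
    [homogeneous_tac | all_homogeneous_tac | perm_tac |].
  by apply: standard_span3_even; grade_tac.
- apply: (@standard_span_perm _ _ _ [:: b2; mul x v; b3]);
    [homogeneous_tac | all_homogeneous_tac | perm_tac |].
  by apply: standard_span3_even; grade_tac.
- apply: (@standard_span_perm _ _ _ [:: x; b2; v; b3]);
    [homogeneous_tac | all_homogeneous_tac | perm_tac |].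
  by apply: standard_span3_even; grade_tac.
Qed.

Lemma triple_good_mul01 u v : A0 u -> A1 v -> triple_good v -> triple_good (mul u v).
Proof.
move=> Hu Hv Gv x b2 b3 Hx H2 H3.
apply: (@standard_span_perm _ _ _ [:: b2; mul u v; b3]);
  [homogeneous_tac | all_homogeneous_tac | perm_tac |].
set z := mul x b2; have Hz : A1 z by apply: mul01.
have -> : ln x [:: b2; mul u v; b3] =
    ln x [:: b2; u; v; b3] + ln u [:: mul z v; b3] - ln u [:: z; v; b3].
  by rewrite /= -/z (left_symmetric_expand Hz Hu Hv) // !(mulDl, mulNl) addrA.
apply: subspaceB (standard_span_subspace 3) _ _.
  apply: subspaceD (standard_span_subspace 3) _ _.
- apply: (@standard_span_perm _ _ _ [:: u; v; b2; b3]);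
    [homogeneous_tac | all_homogeneous_tac | perm_tac |].
  by apply: Gv; grade_tac.
- by apply: standard_span3_even; grade_tac.
- apply: (@standard_span_perm _ _ _ [:: v; z; b3]);
    [homogeneous_tac | all_homogeneous_tac | perm_tac |].
  exact: Gv.
Qed.

Lemma standard_span3 x b1 b2 b3 : A0 x -> A1 b1 -> A1 b2 -> A1 b3 ->
  standard_span 3 (ln x [:: b1; b2; b3]).
Proof.
move=> Hx H1 H2 H3; move: x b2 b3 Hx H2 H3; apply: (odd_part_ind triple_good_subspace) H1.
- exact: triple_good_X1.
- exact: triple_good_mul10.
- exact: triple_good_mul01.
Qed.

Lemma standard_prod_mulr t m p w b : (p = 1 \/ p = 2)%N -> standard_prod t m p w -> A1 b ->
  standard_span (2 * t + m + p).+1 (mul w b).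
Proof.
case=> -> [x [cs [ds [es [Hx Hcs Hds Hes ->]]]]] Hb; rewrite -lnorm_rcons !rcons_cat.
  case: es Hes => [|e [|? ?]] //= [He []].
  apply: (@standard_span_in _ t m 2); [lia | by right |].
  by exists x, cs, ds, [:: e; b].
case: es Hes => [|e1 [|e2 [|? ?]]] //= [He1 [] He2 []].
apply: (@standard_span_perm _ _ _ ([:: e1; e2; b] ++ cs ++ ds)).
- by exists false.
- all_homogeneous_tac.
- perm_tac.
have -> : ((2 * t + m + 2).+1 = 3 + (2 * t + m))%N by lia.
by rewrite lnorm_cat; apply: standard_span_lnorm => //; apply: standard_span3.
Qed.

Lemma standard_span_mulr q w b : A1 b -> standard_span q w -> standard_span q.+1 (mul w b).
Proof.
move=> Hb Hw; apply: (lin_span_min Hw (subspace_mulr _ (standard_span_subspace _))).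
by move=> w' [t [m [p [<- Hp Hprod]]]]; apply: standard_prod_mulr.
Qed.

Lemma lnorm_standard_span q x ys : (1 <= q)%N -> A0 x -> entrywise (nseq q A1) ys ->
  standard_span q (ln x ys).
Proof.
elim: q ys => [//|[|q] IHq] ys _ Hx Hys.
  by apply: (@standard_span_in _ 0 0 1); [| left | exists x, [::], [::], ys].
case/lastP: ys Hys => [|ys b] /entrywise_nseq [//]; rewrite size_rcons => -[Hsize] Hys.
rewrite lnorm_rcons; apply: standard_span_mulr.
  by apply: Hys; rewrite mem_rcons mem_head.
apply: IHq => //; apply/entrywise_nseq; split=> // y Hy.
by apply: Hys; rewrite mem_rcons inE Hy orbT.
Qed.

Lemma standard_span_Lspan q v : standard_span q v ->
  lin_span (fun w => exists t m p : nat, (2 * t + m + p)%N = q /\ (p = 1 \/ p = 2)%N /\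
    Lspan mul A0 (nseq t A0 ++ nseq m kX1 ++ nseq p A1 : seq (V -> Prop)) w) v.
Proof.
move=> Hv; apply: (lin_span_min Hv (lin_span_subspace _)).
move=> _ [t [m [p [Hq Hp [x [cs [ds [es [Hx Hcs Hds Hes ->]]]]]]]]].
apply/lin_span_in; exists t, m, p; do 2!split=> //.
apply/lin_span_in/Lprods_entrywise; exists x, (cs ++ ds ++ es); split=> //.
by apply: entrywise_cat => //; apply: entrywise_cat.
Qed.

End GDN.

Theorem lemma4p3 (k : fieldType) (V : lmodType k) (mul : V -> V -> V)
    (A : bool -> V -> Prop) (X0 X1 : V -> Prop) :
  GDN_superalgebra mul A ->
  (forall x, X0 x -> A false x) ->
  (forall x, X1 x -> A true x) ->
  generates mul (fun x => X0 x \/ X1 x) ->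
  forall q : nat, (1 <= q)%N ->
  forall v, Lspan mul (A false) (nseq q (A true)) v ->
  lin_span (fun w => exists t m p : nat,
          (2 * t + m + p)%N = q /\ (p = 1 \/ p = 2)%N /\
          Lspan mul (A false)
            (nseq t (A false) ++ nseq m (lin_span X1) ++ nseq p (A true) : seq (V -> Prop)) w) v.
Proof.
move=> [linl [linr [A_sub [_ [A_disj [A_gr gdn]]]]]] HX0 HX1 Hgen q Hq v Hv.
apply: (lin_span_min Hv (lin_span_subspace _)) => _ /Lprods_entrywise [x [ys [Hx Hys ->]]].
apply: (standard_span_Lspan (X1 := X1)).
exact: (lnorm_standard_span linl linr A_sub A_disj A_gr gdn HX0 HX1 Hgen Hq Hx Hys).
Qed.
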